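(* Let $\mathcal{M}=(E,\rho)$ be a $q$-matroid and $V$ a subspace of $E$. Then $V$ is independent if and only if $\dim(V\cap Z)\le\rho(Z)$ for all $Z\in\mathcal{Z}(\mathcal{M})$. Consequently, the cyclic flats of $\mathcal{M}$ together with their rank values determine the collection of independent spaces and hence the $q$-matroid $\mathcal{M}$.
   Context: Let $\mathbb{F}=\mathbb{F}_q$, $E$ a finite-dimensional $\mathbb{F}$-vector space. A $q$-matroid is $\mathcal{M}=(E,\rho)$ with $\rho$ from subspaces of $E$ to $\mathbb{Z}_{\ge0}$ satisfying $0\le\rho(V)\le\dim V$, monotonicity, and submodularity $\rho(V+W)+\rho(V\cap W)\le\rho(V)+\rho(W)$. $V$ is independent if $\rho(V)=\dim V$. A flat is $F$ with $\rho(F+\langle x\rangle)>\rho(F)$ for all $x\in E\setminus F$. The cyclic core is $\mathrm{cyc}(V)=\{x\in V\mid\rho(W)=\rho(V)\text{ for all }W\le V\text{ with }W+\langle x\rangle=V\}$; $V$ is cyclic if $\mathrm{cyc}(V)=V$. $\mathcal{Z}(\mathcal{M})$ is the set of cyclic flats (subspaces that are both flats and cyclic). *)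

From HB Require Import structures.
From mathcomp Require Import all_boot all_order all_algebra all_field.
Set Implicit Arguments. Unset Strict Implicit. Unset Printing Implicit Defensive.
Import GRing.Theory.
Local Open Scope ring_scope.

Section QMatroid.
Variables (F : finFieldType) (E : vectType F).

Definition qmatroid (rho : {vspace E} -> nat) : Prop :=
  [/\ (forall V : {vspace E}, (rho V <= \dim V)%N),
      (forall V W : {vspace E}, (V <= W)%VS -> (rho V <= rho W)%N) &
      (forall V W : {vspace E},
          (rho (V + W)%VS + rho (V :&: W)%VS <= rho V + rho W)%N)].

Definition independent (rho : {vspace E} -> nat) (V : {vspace E}) : Prop :=
  rho V = \dim V.

Definition flat (rho : {vspace E} -> nat) (Fl : {vspace E}) : Prop :=
  forall x : E, x \notin Fl -> (rho Fl < rho (Fl + <[x]>)%VS)%N.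

Definition in_cyc (rho : {vspace E} -> nat) (V : {vspace E}) (x : E) : Prop :=
  x \in V /\
  (forall W : {vspace E}, (W <= V)%VS -> (W + <[x]>)%VS = V -> rho W = rho V).

Definition cyclic (rho : {vspace E} -> nat) (V : {vspace E}) : Prop :=
  forall x : E, in_cyc rho V x <-> x \in V.

Definition cyclic_flat (rho : {vspace E} -> nat) (Z : {vspace E}) : Prop :=
  flat rho Z /\ cyclic rho Z.

End QMatroid.

(* If V is dependent, choose Z maximising dim(V ∩ Z) − ρ(Z); its value at
   Z = V is positive, so a maximiser violates the inequality.  Adding vectors
   that do not raise the rank keeps Z a maximiser, so it can be taken flat, and
   a flat maximiser of least dimension is cyclic: removing a non-cyclic vector
   leaves a hyperplane W of rank ρ(Z) − 1, again a maximiser, whose flat closure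
   is a flat maximiser properly contained in Z.  Finally ρ is recovered from the
   independent spaces as ρ(V) = max {dim I | I ≤ V independent}. *)
From HB Require Import structures.
From mathcomp Require Import all_boot all_order all_algebra all_field.
From mathcomp Require Import zify.
From Stdlib Require Import Classical.
Set Implicit Arguments. Unset Strict Implicit. Unset Printing Implicit Defensive.
Import GRing.Theory.

Lemma ex_argmin (T : Type) (P : T -> Prop) (g : T -> nat) :
  (exists t, P t) -> exists2 t, P t & forall u, P u -> g t <= g u.
Proof.
move=> [t0 Pt0]; apply: NNPP => no_min.
suff lb n : forall t, P t -> n <= g t by have := lb (g t0).+1 t0 Pt0; rewrite ltnn.
elim: n => // n IHn t Pt; rewrite ltn_neqAle IHn // andbT; apply/eqP => ngt.
by apply: no_min; exists t => // u /IHn; rewrite ngt.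
Qed.

Lemma ex_argmax (T : Type) (P : T -> Prop) (g : T -> nat) (B : nat) :
  (exists t, P t) -> (forall t, P t -> g t <= B) ->
  exists2 t, P t & forall u, P u -> g u <= g t.
Proof.
move=> exP gB; have [t Pt tmin] := ex_argmin (fun t => B - g t) exP.
by exists t => // u Pu; have := tmin u Pu; have := gB u Pu; have := gB t Pt; lia.
Qed.

Lemma dim_add_line (K : fieldType) (vT : vectType K) (W : {vspace vT}) (x : vT) :
  x \notin W -> \dim (W + <[x]>) = (\dim W).+1.
Proof.
move=> xW; have x0 : x != 0%R by apply: contraNneq xW => ->; exact: mem0v.
have := dimv_sum_cap W <[x]>; rewrite dim_vline x0.
have := dimv_leqif_eq (capvSr W <[x]>); rewrite dim_vline x0 => dim_cap.
have : (W :&: <[x]> != <[x]>)%VS.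
  by apply: contra xW => /eqP capx; rewrite memvE -capx capvSl.
by rewrite -(ltn_leqif dim_cap); lia.
Qed.

Section QMatroidRank.
Variables (F : finFieldType) (E : vectType F) (rho : {vspace E} -> nat).
Hypothesis rhoM : qmatroid rho.

Lemma rho_le_dim V : rho V <= \dim V.
Proof. by case: rhoM. Qed.

Lemma rhoS U V : (U <= V)%VS -> rho U <= rho V.
Proof. by case: rhoM => _ + _; apply. Qed.

Lemma rho_submod U V : rho (U + V) + rho (U :&: V) <= rho U + rho V.
Proof. by case: rhoM. Qed.

Lemma rho0 : rho 0 = 0.
Proof. by apply/eqP; have := rho_le_dim 0; rewrite dimv0 leqn0. Qed.

Lemma rho_incr_le_dim_incr U V : (U <= V)%VS -> rho V + \dim U <= rho U + \dim V.
Proof.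
move=> sUV; have sumV : (V :\: U + U)%VS = V by rewrite addv_diff; apply/addv_idPl.
have := rho_submod (V :\: U) U; rewrite sumV capv_diff rho0.
have := dimv_sum_cap (V :\: U) U; rewrite sumV capv_diff dimv0.
by have := rho_le_dim (V :\: U); lia.
Qed.

Lemma independentS U V : independent rho V -> (U <= V)%VS -> independent rho U.
Proof.
rewrite /independent => indV sUV.
by have := rho_incr_le_dim_incr sUV; have := rho_le_dim U; lia.
Qed.

Lemma flat_subv W Y Z : flat rho Z -> (W <= Z)%VS -> (W <= Y)%VS ->
  rho Y <= rho W -> (Y <= Z)%VS.
Proof.
move=> flatZ sWZ sWY rhoY; apply/subvP => y yY; apply: contraT => yZ.
have sZyYZ : (Z + <[y]> <= Y + Z)%VS.
  by rewrite subv_add addvSr /=; apply: subv_trans (addvSl Y Z); rewrite -memvE.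
have sWYZ : (W <= Y :&: Z)%VS by rewrite subv_cap sWY.
have := flatZ y yZ; have := rhoS sZyYZ; have := rho_submod Y Z; have := rhoS sWYZ.
lia.
Qed.

Lemma exists_flat_closure W :
  exists Y, [/\ (W <= Y)%VS, rho Y = rho W & flat rho Y].
Proof.
have [Y [sWY rhoY] Ymax] := ex_argmax (g := fun Y => \dim Y)
  (ex_intro (fun Y => (W <= Y)%VS /\ rho Y = rho W) W (conj (subvv W) erefl))
  (fun Y _ => dimvS (subvf Y)).
exists Y; split=> // x xY; rewrite ltnNge; apply/negP => rhoYx.
have sYYx := addvSl Y <[x]>.
have rhoYx_eq : rho (Y + <[x]>)%VS = rho W.
  by rewrite -rhoY; apply/eqP; rewrite eqn_leq rhoYx rhoS.
by have := Ymax _ (conj (subv_trans sWY sYYx) rhoYx_eq); rewrite dim_add_line // ltnn.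
Qed.

Lemma rho_add_line_dependent I x : independent rho I ->
  ~ independent rho (I + <[x]>)%VS -> rho (I + <[x]>)%VS = rho I.
Proof.
move=> indI depIx; have xI : x \notin I.
  by apply: contra_notN depIx; rewrite memvE => /addv_idPl ->.
move: indI depIx; rewrite /independent dim_add_line //.
have := rhoS (addvSl I <[x]>); have := rho_le_dim (I + <[x]>)%VS.
by rewrite dim_add_line //; lia.
Qed.

Lemma exists_basis V :
  exists I, [/\ (I <= V)%VS, independent rho I & \dim I = rho V].
Proof.
have indep0 : independent rho 0 by rewrite /independent rho0 dimv0.
have [I [sIV indI] Imax] := ex_argmax (g := fun I => \dim I)
  (ex_intro (fun I => (I <= V)%VS /\ independent rho I) 0%VS (conj (sub0v V) indep0))
  (fun I _ => dimvS (subvf I)).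
have [Y [sIY rhoY flatY]] := exists_flat_closure I.
have sVY : (V <= Y)%VS.
  apply/subvP => x xV; have [xI | xI] := boolP (x \in I); first by move/subvP: sIY; apply.
  have sIxV : (I + <[x]> <= V)%VS by rewrite subv_add sIV -memvE.
  have depIx : ~ independent rho (I + <[x]>)%VS.
    by move=> indIx; have := Imax _ (conj sIxV indIx); rewrite dim_add_line // ltnn.
  have sIxY : (I + <[x]> <= Y)%VS.
    by apply: flat_subv flatY sIY (addvSl I <[x]>) _; rewrite rho_add_line_dependent.
  by move: sIxY; rewrite subv_add -memvE => /andP[].
exists I; split=> //; move: indI; rewrite /independent.
by have := rhoS sVY; have := rhoS sIV; lia.
Qed.

Section Excess.
Variable V : {vspace E}.

(* dim(V ∩ Z) − ρ(Z), shifted by dim E so that it is never truncated *)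
Definition excess Z := \dim {:E} + \dim (V :&: Z) - rho Z.

Definition max_excess Z := forall Y, excess Y <= excess Z.

Lemma exists_max_excess : exists Z, max_excess Z.
Proof.
have [Z _ Zmax] := ex_argmax (g := excess) (ex_intro (fun=> True) V I)
  (fun Z _ => leq_trans (leq_subr _ _) (leq_add (leqnn _) (dimvS (subvf (V :&: Z))))).
by exists Z => Y; apply: Zmax.
Qed.

Lemma max_excessW Z Y : max_excess Z -> excess Z <= excess Y -> max_excess Y.
Proof. by move=> Zmax leZY U; apply: leq_trans (Zmax U) leZY. Qed.

Lemma max_excess_closure Z Y :
  max_excess Z -> (Z <= Y)%VS -> rho Y = rho Z -> max_excess Y.
Proof.
move=> Zmax sZY rhoY; apply: max_excessW Zmax _.
by rewrite /excess rhoY leq_sub2r // leq_add2l dimvS // capvS.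
Qed.

Lemma exists_flat_max_excess : exists Z, flat rho Z /\ max_excess Z.
Proof.
have [Z Zmax] := exists_max_excess; have [Y [sZY rhoY flatY]] := exists_flat_closure Z.
by exists Y; split=> //; apply: max_excess_closure Zmax sZY rhoY.
Qed.

Lemma max_excess_hyperplane W Z : max_excess Z -> (W <= Z)%VS ->
  \dim Z = (\dim W).+1 -> rho W < rho Z -> max_excess W.
Proof.
move=> Zmax sWZ dimZ ltWZ; apply: max_excessW Zmax _; rewrite /excess.
have := rho_incr_le_dim_incr sWZ; have := dimv_sum_cap (V :&: Z) W.
have : \dim (V :&: Z + W) <= \dim Z by apply: dimvS; rewrite subv_add capvSr sWZ.
have : \dim (V :&: Z :&: W) <= \dim (V :&: W) by apply: dimvS; rewrite capvS ?capvSl.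
lia.
Qed.

Lemma cyclic_min_flat_max_excess Z : flat rho Z -> max_excess Z ->
  (forall Y, flat rho Y -> max_excess Y -> \dim Z <= \dim Y) -> cyclic rho Z.
Proof.
move=> flatZ Zmax Zmin x; split=> [[] // | xZ]; split=> // W sWZ WxZ.
apply/eqP; rewrite eqn_leq rhoS //= leqNgt; apply/negP => ltWZ.
have xW : x \notin W.
  by apply: contraTN ltWZ; rewrite -WxZ memvE => /addv_idPl ->; rewrite ltnn.
have dimZ : \dim Z = (\dim W).+1 by rewrite -WxZ dim_add_line.
have Wmax := max_excess_hyperplane Zmax sWZ dimZ ltWZ.
have [Y [sWY rhoY flatY]] := exists_flat_closure W.
have sYZ : (Y <= Z)%VS by apply: flat_subv flatZ sWZ sWY _; rewrite rhoY.
have neYZ : Y != Z by apply: contraTneq ltWZ => <-; rewrite -rhoY ltnn.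
have := Zmin Y flatY (max_excess_closure Wmax sWY rhoY).
by rewrite leqNgt (ltn_leqif (dimv_leqif_eq sYZ)) neYZ.
Qed.

Lemma max_excess_violates Z : rho V < \dim V -> max_excess Z -> rho Z < \dim (V :&: Z).
Proof. by move=> depV Zmax; have := Zmax V; rewrite /excess capvv; lia. Qed.

Lemma exists_violated_cyclic_flat : rho V < \dim V ->
  exists Z, cyclic_flat rho Z /\ rho Z < \dim (V :&: Z).
Proof.
move=> depV.
have [Z [flatZ Zmax] Zmin] := ex_argmin (fun Z => \dim Z) exists_flat_max_excess.
exists Z; split; last exact: max_excess_violates.
by split=> //; apply: cyclic_min_flat_max_excess => // Y flatY Ymax; apply: Zmin.
Qed.

End Excess.

Lemma independent_cyclic_flatsP V : independent rho V <->
  (forall Z, cyclic_flat rho Z -> \dim (V :&: Z) <= rho Z).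
Proof.
split=> [indV Z _ | bounded].
  by rewrite -(independentS indV (capvSl V Z)); apply/rhoS/capvSr.
apply/eqP; rewrite eqn_leq rho_le_dim leqNgt; apply/negP => depV.
by have [Z [/bounded]] := exists_violated_cyclic_flat depV; rewrite leqNgt => /negP.
Qed.

End QMatroidRank.

Lemma eq_rho_independent (F : finFieldType) (E : vectType F)
    (rho rho' : {vspace E} -> nat) :
  qmatroid rho -> qmatroid rho' ->
  (forall V, independent rho V <-> independent rho' V) -> forall V, rho V = rho' V.
Proof.
move=> rhoM rho'M eq_indep V.
have [I [sIV /eq_indep indI dimI]] := exists_basis rhoM V.
have [J [sJV /eq_indep indJ dimJ]] := exists_basis rho'M V.
move: indI indJ; rewrite /independent.
by have := rhoS rho'M sIV; have := rhoS rhoM sJV; lia.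
Qed.

Theorem theorem4p5 (F : finFieldType) (E : vectType F)
    (rho : {vspace E} -> nat) (Hrho : qmatroid rho) :
  (forall V : {vspace E},
      independent rho V <->
      (forall Z : {vspace E}, cyclic_flat rho Z -> (\dim (V :&: Z)%VS <= rho Z)%N))
  /\
  (forall rho' : {vspace E} -> nat, qmatroid rho' ->
      (forall Z : {vspace E}, cyclic_flat rho Z <-> cyclic_flat rho' Z) ->
      (forall Z : {vspace E}, cyclic_flat rho Z -> rho Z = rho' Z) ->
      (forall V : {vspace E}, independent rho V <-> independent rho' V) /\
      (forall V : {vspace E}, rho V = rho' V)).
Proof.
split=> [V | rho' rho'M eq_cf eq_rho]; first exact: independent_cyclic_flatsP.
have eq_indep V : independent rho V <-> independent rho' V.
  split=> [/(independent_cyclic_flatsP Hrho) | /(independent_cyclic_flatsP rho'M)] bounded.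
    apply/(independent_cyclic_flatsP rho'M) => Z /eq_cf cfZ.
    by rewrite -eq_rho // bounded.
  apply/(independent_cyclic_flatsP Hrho) => Z cfZ.
  by rewrite eq_rho // bounded //; apply/eq_cf.
by split=> //; apply: eq_rho_independent.
Qed.
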